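(* Let $\mathcal M=\langle M,<,+,\dots\rangle$ be a linear o-minimal expansion of an ordered group. Let $a<b$, $c<d$ in $M$ and let $h:[a,b]\times[c,d]\to M$ be an $\mathcal L$-definable continuous function such that for every $t\in(a,b)$, the map $h(t,-):[c,d]\to M$ is strictly increasing. Then $h(b,d)-h(b,c)>0$.
   Context: $\mathcal L$-definable means definable in $\mathcal M$ with parameters. A function $f:B\subseteq M^n\to M$ is affine if $f(x+t)-f(x)=f(y+t)-f(y)$ whenever $x,y,x+t,y+t\in B$; $\mathcal M$ is linear if every definable $f:B\subseteq M^n\to M$ is affine on each piece of some finite partition of $B$ into definable sets. *)

(* Definable sets (with
   parameters) of an expansion of <M,<,+> are modelled, following
   van den Dries ("Tame topology and o-minimal structures", Ch. 1), as a
   "structure" on M: for each n a family S n of subsets of M^n.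
   Points of M^n are sequences of length n. *)
From Stdlib Require Import List.
From HB Require Import structures.
From mathcomp Require Import all_boot all_order all_algebra.
Set Implicit Arguments. Unset Strict Implicit. Unset Printing Implicit Defensive.
Import GRing.Theory.
Local Open Scope ring_scope.

Section Defs.
Variable M : zmodType.
Variable lt : M -> M -> Prop.

Definition le (x y : M) : Prop := lt x y \/ x = y.

Definition ordered_group : Prop :=
  [/\ (forall x, ~ lt x x),
      (forall x y z, lt x y -> lt y z -> lt x z),
      (forall x y, lt x y \/ x = y \/ lt y x) &
      (forall x y z, lt x y -> lt (x + z) (y + z))].

Definition set_of_dim (n : nat) (A : seq M -> Prop) : Prop :=
  forall s, A s -> size s = n.

Definition is_structure (S : nat -> (seq M -> Prop) -> Prop) : Prop :=
  [/\
      (forall n A, S n A -> set_of_dim n A),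
      [/\ (forall n, S n (fun _ => False)),
          (forall n A B, S n A -> S n B -> S n (fun s => A s \/ B s)) &
          (forall n A, S n A -> S n (fun s => size s = n /\ ~ A s))],
      [/\ (forall n A, S n A -> S n.+1 (fun s => size s = n.+1 /\ A (take n s))),
          (forall n A, S n A -> S n.+1 (fun s => size s = n.+1 /\ A (behead s))),
          (forall n i j, (i < n)%N -> (j < n)%N ->
             S n (fun s => size s = n /\ nth 0 s i = nth 0 s j)) &
          (forall n A, S n.+1 A -> S n (fun s => exists z, A (rcons s z)))] &
      [/\ S 2 (fun s => exists x y, s = [:: x; y] /\ lt x y),
          S 3 (fun s => exists x y, s = [:: x; y; x + y]) &
          (forall a, S 1 (fun s => s = [:: a]))]].

(* Open interval with endpoints in M ∪ {-oo, +oo} (None = infinite). *)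
Definition in_interval (iv : option M * option M) (x : M) : Prop :=
  (match iv.1 with Some u => lt u x | None => True end) /\
  (match iv.2 with Some v => lt x v | None => True end).

Definition o_minimal (S : nat -> (seq M -> Prop) -> Prop) : Prop :=
  forall A, S 1 A ->
    exists (pts : seq M) (ivs : seq (option M * option M)),
      forall x, A [:: x] <-> (List.In x pts \/ exists iv, List.In iv ivs /\ in_interval iv x).

Definition addv (s t : seq M) : seq M := [seq p.1 + p.2 | p <- zip s t].

Definition affine_on (B : seq M -> Prop) (f : seq M -> M) : Prop :=
  forall x y t, B x -> B y -> B (addv x t) -> B (addv y t) ->
    f (addv x t) - f x = f (addv y t) - f y.

Definition graph (B : seq M -> Prop) (f : seq M -> M) : seq M -> Prop :=
  fun s => exists x, B x /\ s = rcons x (f x).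

Definition definable_fun (S : nat -> (seq M -> Prop) -> Prop) (n : nat)
  (B : seq M -> Prop) (f : seq M -> M) : Prop :=
  S n B /\ S n.+1 (graph B f).

Definition linear_structure (S : nat -> (seq M -> Prop) -> Prop) : Prop :=
  forall n B f, definable_fun S n B f ->
    exists Bs : seq (seq M -> Prop),
      [/\ (forall C, List.In C Bs -> S n C),
          (forall x, B x <-> exists C, List.In C Bs /\ C x),
          (forall i j x, (i < size Bs)%N -> (j < size Bs)%N -> i <> j ->
              nth (fun _ => False) Bs i x -> nth (fun _ => False) Bs j x -> False) &
          (forall C, List.In C Bs -> affine_on C f)].

Definition in_box (a b c d x y : M) : Prop :=
  le a x /\ le x b /\ le c y /\ le y d.

Definition definable_on_box (S : nat -> (seq M -> Prop) -> Prop)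
  (a b c d : M) (h : M -> M -> M) : Prop :=
  S 3 (fun s => exists x y, s = [:: x; y; h x y] /\ in_box a b c d x y).

Definition continuous_on_box (a b c d : M) (h : M -> M -> M) : Prop :=
  forall x0 y0, in_box a b c d x0 y0 ->
    forall u v, lt u (h x0 y0) -> lt (h x0 y0) v ->
      exists u1 v1 u2 v2, [/\ lt u1 x0, lt x0 v1, lt u2 y0, lt y0 v2 &
        forall x y, in_box a b c d x y -> lt u1 x -> lt x v1 -> lt u2 y -> lt y v2 ->
          lt u (h x y) /\ lt (h x y) v].
End Defs.

From Pilot Require Import Defs.
From Stdlib Require Import List Classical ClassicalEpsilon FunctionalExtensionality PropExtensionality.
From HB Require Import structures.
From mathcomp Require Import all_boot all_order all_algebra.
Import GRing.Theory.
Local Open Scope ring_scope.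
Set Implicit Arguments. Unset Strict Implicit.

(* By linearity, h is affine on each of finitely many pieces covering the box.
   Take more heights y_0, ..., y_N in (c, d) than there are pieces: for each t
   the points (t, y_i) are distributed among the pieces, so by pigeonhole one
   piece C contains two points (t, yl), (t, yh) with yl < yh for t arbitrarily
   close to b.  Affinity of h on C makes h t yh - h t yl a constant D, which is
   positive by strict monotonicity, and continuity carries D <= h b yh - h b yl
   to the limit t -> b; the outer increments h b yl - h b c and h b d - h b yh
   are >= 0 by the same limit argument.  O-minimality is used only to make the
   order dense: the definable set of doubles z + z is cofinal, hence contains a
   final segment, so no positive element can be the least one. *)
Section OrderedGroup.
Variables (M : zmodType) (lt : M -> M -> Prop).
Hypothesis Hgrp : ordered_group lt.
Local Notation le := (le lt).

Lemma ltxx x : ~ lt x x.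
Proof. by case: Hgrp. Qed.

Lemma lt_trans y x z : lt x y -> lt y z -> lt x z.
Proof. by case: Hgrp => _ tr _ _; apply: tr. Qed.

Lemma lt_total x y : lt x y \/ x = y \/ lt y x.
Proof. by case: Hgrp. Qed.

Lemma lt_add2r z x y : lt x y -> lt (x + z) (y + z).
Proof. by case: Hgrp => _ _ _; apply. Qed.

Lemma lt_add2l z x y : lt x y -> lt (z + x) (z + y).
Proof. by rewrite ![z + _]addrC; apply: lt_add2r. Qed.

Lemma lt_add x y z w : lt x y -> lt z w -> lt (x + z) (y + w).
Proof. by move=> /(lt_add2r z) hxy /(lt_add2l y); apply: lt_trans. Qed.

Lemma subr_gt0 x y : lt 0 (y - x) <-> lt x y.
Proof.
split=> [/(lt_add2r x)|/(lt_add2r (- x))]; first by rewrite add0r subrK.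
by rewrite subrr.
Qed.

Lemma lt_opp x y : lt x y -> lt (- y) (- x).
Proof. by move=> /subr_gt0 hxy; apply/subr_gt0; rewrite opprK addrC. Qed.

Lemma lt_add_pos x p : lt 0 p -> lt x (x + p).
Proof. by move=> /(lt_add2l x); rewrite addr0. Qed.

Lemma lt_sub_pos x p : lt 0 p -> lt (x - p) x.
Proof. by move=> /lt_opp /(lt_add2l x); rewrite oppr0 addr0. Qed.

Lemma le_lt_trans y x z : le x y -> lt y z -> lt x z.
Proof. by case=> [|->] //; apply: lt_trans. Qed.

Lemma lt_le_trans y x z : lt x y -> le y z -> lt x z.
Proof. by move=> hxy [|<-] //; apply: lt_trans. Qed.

Lemma le_trans y x z : le x y -> le y z -> le x z.
Proof. by case=> [hxy|->] // hyz; left; apply: lt_le_trans hxy hyz. Qed.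

Lemma le_ngt x y : le x y -> ~ lt y x.
Proof. by move=> hxy /(le_lt_trans hxy); apply: ltxx. Qed.

Lemma ngt_le x y : ~ lt y x -> le x y.
Proof. by case: (lt_total x y) => [|[|]]; [left|right|]. Qed.

Lemma nle_gt x y : ~ le x y -> lt y x.
Proof. by case: (lt_total x y) => [|[|]] // h []; [left|right]. Qed.

Lemma lt_le_add x y z w : lt x y -> le z w -> lt (x + z) (y + w).
Proof. by move=> hxy [hzw|<-]; [apply: lt_add | apply: lt_add2r]. Qed.

Lemma exists_max x y : exists m, [/\ le x m, le y m & m = x \/ m = y].
Proof.
case: (lt_total x y) => [hxy|[->|hyx]]; first by exists y; split; [left|right|right].
  by exists y; split; [right|right|right].
by exists x; split; [right|left|left].
Qed.

Lemma exists_ub (s : seq M) : exists B, forall x, In x s -> le x B.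
Proof.
elim: s => [|x s [B hB]]; first by exists 0.
have [m [hxm hBm _]] := exists_max x B.
by exists m => y [<-|/hB hyB] //; apply: le_trans hyB hBm.
Qed.

Lemma lt_gap_double e q : lt 0 e -> (forall r, lt 0 r -> ~ lt r e) -> e <> q + q.
Proof.
move=> + gap eq_e; rewrite {}eq_e in gap * => he.
case: (lt_total q 0) => [hq|[hq|hq]].
- have := lt_add hq hq; rewrite addr0 => hqq0.
  by apply: (@ltxx 0); apply: lt_trans he hqq0.
- by move: he; rewrite hq addr0; apply: ltxx.
- have /ngt_le hqq : ~ lt q (q + q) by apply: gap.
  by apply: (le_ngt hqq); rewrite -[q in lt q _]add0r; apply: lt_add2r.
Qed.

End OrderedGroup.

Section Definable.
Variables (M : zmodType) (lt : M -> M -> Prop) (S : nat -> (seq M -> Prop) -> Prop).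

Lemma S_ext n (P Q : seq M -> Prop) : S n P -> (forall s, P s <-> Q s) -> S n Q.
Proof.
move=> hP PQ; suff -> : Q = P by [].
apply: functional_extensionality => s.
by apply: propositional_extensionality; apply: iff_sym.
Qed.

Hypothesis HS : is_structure lt S.

Lemma S_setI n (A B : seq M -> Prop) : S n A -> S n B -> S n (fun s => A s /\ B s).
Proof.
have [dim [_ SU SC] _ _] := HS; move=> hA hB.
apply: (S_ext (SC _ _ (SU _ _ _ (SC _ _ hA) (SC _ _ hB)))) => s; split.
  case=> sz nAB; split; apply: NNPP => nX; apply: nAB.
    by left.
  by right.
by case=> hAs hBs; split; [apply: dim _ _ hA _ hAs | case=> -[_ []]].
Qed.

Lemma S_doubles : S 1 (fun s => exists z, s = [:: z + z]).
Proof.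
have [_ _ [_ Sbehead Sdiag Sproj] [_ Sadd _]] := HS.
have S3 := S_setI Sadd (Sdiag 3%N 0%N 1%N isT isT).
(* [:: w; x; x; x + x] with w = x + x, then project away the last three coordinates. *)
have S4 := S_setI (Sbehead _ _ S3) (Sdiag 4%N 0%N 3%N isT isT).
apply: (S_ext (Sproj _ _ (Sproj _ _ (Sproj _ _ S4)))) => s; split.
  case=> z1 [z2 [z3 [[sz [[x [y e1]] e2]] [_ e3]]]].
  move: sz e1 e2 e3; rewrite !size_rcons; case: s => [|w [|? ?]] //= _.
  by case=> -> -> -> /= [_ ->] ->; exists y.
case=> z ->; exists z, z, (z + z).
do !split => //; by exists z, z.
Qed.

Definition box_set (a b c d : M) (s : seq M) : Prop :=
  exists x y, s = [:: x; y] /\ in_box lt a b c d x y.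

Lemma definable_fun_box a b c d (h : M -> M -> M) :
  definable_on_box lt S a b c d h ->
  definable_fun S 2 (box_set a b c d) (fun s => h s`_0 s`_1).
Proof.
have [_ _ [_ _ _ Sproj] _] := HS => hdef; split.
  apply: (S_ext (Sproj _ _ hdef)) => s; split.
    case=> z [x [y [e hxy]]].
    by case: (rcons_inj (e : rcons s z = rcons [:: x; y] (h x y))) => -> _; exists x, y.
  by case=> x [y [-> hxy]]; exists (h x y), x, y.
apply: (S_ext hdef) => s; split.
  by case=> x [y [-> hxy]]; exists [:: x; y]; split => //; exists x, y.
by case=> _ [[x [y [-> hxy]]] ->]; exists x, y.
Qed.

End Definable.

Section OMinimal.
Variables (M : zmodType) (lt : M -> M -> Prop) (S : nat -> (seq M -> Prop) -> Prop).
Hypotheses (Hgrp : ordered_group lt) (HS : is_structure lt S) (Homin : o_minimal lt S).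

Lemma o_minimal_ultimately_constant A : S 1 A ->
  exists B, forall x y, lt B x -> lt B y -> A [:: x] -> A [:: y].
Proof.
move=> /Homin [pts [ivs hA]].
have [B hB] := exists_ub Hgrp (pts ++ flat_map (fun iv => pmap id [:: iv.1; iv.2]) ivs).
have hend iv u : In iv ivs -> iv.1 = Some u \/ iv.2 = Some u -> le lt u B.
  move=> hiv hu; apply: hB; apply/in_app_iff; right; apply/in_flat_map.
  by exists iv; split => //; case: hu => ->; [left | case: iv.1 => [?|]; [right; left | left]].
exists B => x y hBx hBy /hA [hx|[[l r] [hiv [/= hl hr]]]].
  by case: (le_ngt Hgrp (hB x (proj2 (in_app_iff _ _ _) (or_introl hx))) hBx).
apply/hA; right; exists (l, r); split => //; split => /=.
  case: l hl hiv => [u|] // _ hiv.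
  exact: (le_lt_trans Hgrp (hend _ u hiv (or_introl erefl)) hBy).
case: r hr hiv => [v|] // hxv hiv; exfalso.
exact: (le_ngt Hgrp (hend _ v hiv (or_intror erefl)) (lt_trans Hgrp hBx hxv)).
Qed.

Lemma dense x y : lt x y -> exists z, lt x z /\ lt z y.
Proof.
move=> hxy; apply: NNPP => nz.
set e := y - x.
have he : lt 0 e by apply/(subr_gt0 Hgrp).
have gap r : lt 0 r -> ~ lt r e.
  move=> hr hre; apply: nz; exists (x + r); split.
    by have := lt_add2l Hgrp x hr; rewrite addr0.
  by have := lt_add2l Hgrp x hre; rewrite /e addrCA subrr addr0.
have [B hB] := o_minimal_ultimately_constant (S_doubles HS).
have [m [hBm h0m _]] := exists_max Hgrp B 0.
set w := m + e.
have hmw : lt m w by have := lt_add2l Hgrp m he; rewrite addr0.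
have hw0 : lt 0 w := le_lt_trans Hgrp h0m hmw.
have hww : lt B (w + w).
  apply: (le_lt_trans Hgrp hBm (lt_trans Hgrp hmw _)).
  by have := lt_add2l Hgrp w hw0; rewrite addr0.
have hwwe : lt B (w + w + e).
  by apply: (lt_trans Hgrp hww); have := lt_add2l Hgrp (w + w) he; rewrite addr0.
(* w + w is a double beyond B, hence so is w + w + e, and e = 2 (v - w). *)
have [v [ev]] := hB _ _ hww hwwe (ex_intro _ w erefl).
apply: (lt_gap_double Hgrp he gap (q := v - w)).
by rewrite addrACA -opprD -ev addrAC subrr add0r.
Qed.

End OMinimal.

Lemma In_mem (T : eqType) (x : T) (s : seq T) : In x s <-> x \in s.
Proof.
elim: s => [|y s IH] //=; rewrite in_cons; split.
  by case=> [->|/IH ->]; rewrite ?eqxx ?orbT.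
by case/orP=> [/eqP->|/IH hx]; [left|right].
Qed.

Lemma pigeonhole (T : eqType) (U : Type) (R : T -> U -> Prop) (s : seq T) (cs : seq U) :
  uniq s -> (size cs < size s)%N -> (forall x, In x s -> exists C, In C cs /\ R x C) ->
  exists x y C, [/\ In x s, In y s, x <> y, In C cs & R x C /\ R y C].
Proof.
move=> us hsz hR.
pose P x k := exists C, nth_error cs k = Some C /\ R x C.
pose f x := epsilon (inhabits 0%N) (P x).
have hf x : In x s -> P x (f x).
  move=> /hR [C [hC hxC]]; have [k hk] := In_nth_error _ _ hC.
  by apply: epsilon_spec; exists k, C.
have : ~~ uniq (map f s).
  apply/negP => uf; have : (size (map f s) <= size (iota 0 (size cs)))%N.
    apply: uniq_leq_size uf _ => _ /mapP [x /In_mem /hf [C [hC _]] ->].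
    by rewrite mem_iota add0n; apply/ltP/nth_error_Some; rewrite hC.
  by rewrite size_map size_iota leqNgt hsz.
move=> /negP nu; apply: NNPP => hn; apply: nu.
rewrite map_inj_in_uniq // => x y /In_mem hx /In_mem hy fxy.
apply: NNPP => nxy; apply: hn.
have [C [hC hxC]] := hf x hx; have [C' [hC' hyC']] := hf y hy.
move: hC' hyC'; rewrite -fxy hC => -[<-] hyC.
by exists x, y, C; split => //; apply: nth_error_In hC.
Qed.

Section NearRightEnd.
Variables (M : zmodType) (lt : M -> M -> Prop).
Hypothesis Hgrp : ordered_group lt.
Hypothesis Hdense : forall x y, lt x y -> exists z, lt x z /\ lt z y.
Local Notation le := (le lt).

Lemma exists_uniq_between n u v : lt u v ->
  exists s : seq M, [/\ size s = n, uniq s & forall y, In y s -> lt u y /\ lt y v].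
Proof.
elim: n u => [|n IH] u huv; first by exists [::].
have [z [huz hzv]] := Hdense huv.
have [s [sz us hs]] := IH z hzv.
exists (z :: s); split => /=; first by rewrite sz.
  by rewrite us andbT; apply/negP => /In_mem /hs [hzz _]; apply: (ltxx Hgrp hzz).
by move=> y [<-|/hs [hzy hyv]] //; split => //; apply: (lt_trans Hgrp huz hzy).
Qed.

Variables a b : M.
Hypothesis hab : lt a b.

Definition eventually_below (P : M -> Prop) : Prop :=
  exists2 t0, lt t0 b & forall t, lt t0 t -> lt t b -> P t.

Definition frequently_below (P : M -> Prop) : Prop :=
  forall t0, lt t0 b -> exists t, [/\ lt t0 t, lt t b & P t].

Lemma eventually_below_and (P Q : M -> Prop) :
  eventually_below P -> eventually_below Q -> eventually_below (fun t => P t /\ Q t).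
Proof.
move=> [t1 ht1 hP] [t2 ht2 hQ]; have [m [h1m h2m hm]] := exists_max Hgrp t1 t2.
exists m; first by case: hm => ->.
move=> t hmt htb; split; [apply: hP | apply: hQ] => //.
  exact: (le_lt_trans Hgrp h1m hmt).
exact: (le_lt_trans Hgrp h2m hmt).
Qed.

Lemma eventually_below_all (T : Type) (s : seq T) (P : T -> M -> Prop) :
  (forall x, In x s -> eventually_below (P x)) ->
  eventually_below (fun t => forall x, In x s -> P x t).
Proof.
elim: s => [|x s IH] hs; first by exists a.
have [t0 ht0 hP] := eventually_below_and (hs x (or_introl erefl))
  (IH (fun y hy => hs y (or_intror hy))).
by exists t0 => // t h1 h2 y [<-|hy]; have [] := hP t h1 h2; auto.
Qed.

Lemma not_frequently_below (P : M -> Prop) :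
  ~ frequently_below P -> eventually_below (fun t => ~ P t).
Proof.
move=> nf; apply: NNPP => ne; apply: nf => t0 ht0; apply: NNPP => nex; apply: ne.
by exists t0 => // t h1 h2 hP; apply: nex; exists t.
Qed.

Lemma frequently_below_impl (P Q : M -> Prop) :
  (forall t, P t -> Q t) -> frequently_below P -> frequently_below Q.
Proof. by move=> PQ hP t0 /hP [t [h1 h2 /PQ]]; exists t. Qed.

Lemma frequently_eventually_below (P Q : M -> Prop) :
  frequently_below P -> eventually_below Q -> exists t, P t /\ Q t.
Proof.
move=> hP [t0 ht0 hQ]; have [t [h1 h2 hPt]] := hP t0 ht0.
by exists t; split => //; apply: hQ.
Qed.

Lemma frequently_of_eventually (P : M -> Prop) :
  eventually_below P -> frequently_below P.
Proof.
move=> [t1 ht1 hP] t0 ht0; have [m [h0m h1m hm]] := exists_max Hgrp t0 t1.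
have [t [hmt htb]] : exists t, lt m t /\ lt t b by apply: Hdense; case: hm => ->.
exists t; split => //; first exact: (le_lt_trans Hgrp h0m hmt).
by apply: hP => //; apply: (le_lt_trans Hgrp h1m hmt).
Qed.

Variables (c d : M) (h : M -> M -> M).
Hypothesis hcd : lt c d.
Hypothesis hcont : continuous_on_box lt a b c d h.
Hypothesis hincr : forall t, lt a t -> lt t b ->
  forall y1 y2, le c y1 -> le y2 d -> lt y1 y2 -> lt (h t y1) (h t y2).

Lemma eventually_near_right_end y u v : le c y -> le y d ->
  lt u (h b y) -> lt (h b y) v -> eventually_below (fun t => lt u (h t y) /\ lt (h t y) v).
Proof.
move=> hcy hyd hu hv.
have hby : in_box lt a b c d b y by split; [left | split; [right | split]].
have [u1 [v1 [u2 [v2 [hu1 hv1 hu2 hv2 hN]]]]] := hcont hby hu hv.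
have [m [h1m ham hm]] := exists_max Hgrp u1 a.
exists m; first by case: hm => ->.
move=> t hmt htb; apply: hN => //.
- split; [left | split; [left | split]] => //; exact: (le_lt_trans Hgrp ham hmt).
- exact: (le_lt_trans Hgrp h1m hmt).
- exact: (lt_trans Hgrp htb hv1).
Qed.

Lemma le_diff_at_right_end dl y1 y2 : le c y1 -> le y1 d -> le c y2 -> le y2 d ->
  frequently_below (fun t => le dl (h t y2 - h t y1)) -> le dl (h b y2 - h b y1).
Proof.
move=> hc1 hd1 hc2 hd2 hfreq; apply: NNPP => /(nle_gt Hgrp) /(subr_gt0 Hgrp).
set g := dl - _ => hg.
(* Split the gap g as e + (g - e) between the two endpoints. *)
have [e [he hge]] := Hdense hg.
have /(subr_gt0 Hgrp) hge' := hge.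
have ev1 := eventually_near_right_end hc1 hd1 (lt_sub_pos Hgrp (h b y1) hge')
  (lt_add_pos Hgrp (h b y1) he).
have ev2 := eventually_near_right_end hc2 hd2 (lt_sub_pos Hgrp (h b y2) he)
  (lt_add_pos Hgrp (h b y2) he).
have [t [hdl [[hlo _] [_ hhi]]]] :=
  frequently_eventually_below hfreq (eventually_below_and ev1 ev2).
have := lt_add Hgrp hhi (lt_opp Hgrp hlo).
have -> : h b y2 + e - (h b y1 - (g - e)) = dl.
  rewrite /g; move: (h b y2) (h b y1) => A B.
  by rewrite opprB [_ - e - B]addrAC addrA [A + e + _]addrAC addrK addrC -addrA [- B + A]addrC subrK.
exact: (le_ngt Hgrp hdl).
Qed.

Lemma right_end_diff_ge0 y1 y2 : le c y1 -> lt y1 y2 -> le y2 d -> le 0 (h b y2 - h b y1).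
Proof.
move=> hc1 h12 hd2.
have hd1 : le y1 d by left; apply: (lt_le_trans Hgrp h12 hd2).
have hc2 : le c y2 by left; apply: (le_lt_trans Hgrp hc1 h12).
apply: (le_diff_at_right_end hc1 hd1 hc2 hd2); apply: frequently_of_eventually.
by exists a => // t hat htb; left; apply/(subr_gt0 Hgrp); apply: hincr.
Qed.

Lemma diff_pos_of_affine_piece (C : seq M -> Prop) yl yh :
  affine_on C (fun s => h s`_0 s`_1) -> lt yl yh -> lt c yl -> lt yh d ->
  frequently_below (fun t => lt a t /\ C [:: t; yl] /\ C [:: t; yh]) ->
  lt 0 (h b d - h b c).
Proof.
move=> haff hlh hcl hhd hfreq.
have hcl' : le c yl by left.
have hyld : le yl d by left; apply: (lt_trans Hgrp hlh hhd).
have hcyh : le c yh by left; apply: (lt_trans Hgrp hcl hlh).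
have hhd' : le yh d by left.
have [t1 [_ ht1b [hat1 [Cl1 Ch1]]]] := hfreq a hab.
set D := h t1 yh - h t1 yl.
have hD : lt 0 D by apply/(subr_gt0 Hgrp); apply: hincr.
have hshift t : Defs.addv [:: t; yl] [:: 0; yh - yl] = [:: t; yh].
  by rewrite /Defs.addv /= addr0 addrC subrK.
have hconst t : C [:: t; yl] -> C [:: t; yh] -> h t yh - h t yl = D.
  move=> hl hh; have := haff _ _ [:: 0; yh - yl] hl Cl1.
  by rewrite !hshift => /(_ hh Ch1).
have mid : le D (h b yh - h b yl).
  apply: le_diff_at_right_end => //; apply: frequently_below_impl hfreq.
  by move=> t [_ [hl hh]]; rewrite hconst //; right.
have low := right_end_diff_ge0 (or_intror erefl) hcl hyld.
have up := right_end_diff_ge0 hcyh hhd (or_intror erefl).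
have := lt_le_add Hgrp (lt_le_add Hgrp (lt_le_trans Hgrp hD mid) low) up.
rewrite !addr0; move: (h b yh) (h b yl) (h b c) (h b d) => X Y Z W.
by rewrite [X - Y + _]addrA subrK [X - Z + _]addrC addrA subrK.
Qed.

Lemma exists_piece_frequently (Bs : seq (seq M -> Prop)) :
  (forall t y, lt a t -> lt t b -> lt c y -> lt y d -> exists C, In C Bs /\ C [:: t; y]) ->
  exists C yl yh, [/\ In C Bs, lt yl yh, lt c yl, lt yh d &
    frequently_below (fun t => lt a t /\ C [:: t; yl] /\ C [:: t; yh])].
Proof.
move=> hcover; apply: NNPP => hn.
have [ys [sz uys hys]] := exists_uniq_between (size Bs).+1 hcd.
pose Q y1 y2 (C : seq M -> Prop) t := C [:: t; y1] /\ C [:: t; y2].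
have hsep y1 y2 C : In y1 ys -> In y2 ys -> In C Bs ->
    eventually_below (fun t => lt a t -> y1 <> y2 -> ~ Q y1 y2 C t).
  move=> h1 h2 hC; have [->|ne] := classic (y1 = y2); first by exists a.
  have [t0 ht0 hQ] : eventually_below (fun t => ~ (lt a t /\ Q y1 y2 C t)).
    apply: not_frequently_below => hf; apply: hn.
    have [c1 d1] := hys _ h1; have [c2 d2] := hys _ h2.
    case: (lt_total Hgrp y1 y2) => [l|[//|l]]; first by exists C, y1, y2.
    exists C, y2, y1; split => //; apply: frequently_below_impl hf.
    by move=> t [? [? ?]].
  by exists t0 => // t h0 hb hat _ hQt; apply: hQ h0 hb _.
have [t0 ht0 hev] : eventually_below (fun t => lt a t /\ forall y1, In y1 ys ->
    forall y2, In y2 ys -> forall C, In C Bs -> lt a t -> y1 <> y2 -> ~ Q y1 y2 C t).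
  apply: eventually_below_and; first by exists a.
  apply: eventually_below_all => y1 h1; apply: eventually_below_all => y2 h2.
  by apply: eventually_below_all => C hC; apply: hsep.
have [t [_ htb [hat hsept]]] := frequently_of_eventually (ex_intro2 _ _ t0 ht0 hev) hab.
have hsz : (size Bs < size ys)%N by rewrite sz.
have hcov y : In y ys -> exists C, In C Bs /\ C [:: t; y].
  by move=> /hys [hcy hyd]; apply: hcover.
have [y1 [y2 [C [h1 h2 ne hC hQ]]]] := pigeonhole (R := fun y C => C [:: t; y]) uys hsz hcov.
exact: hsept y1 h1 y2 h2 C hC hat ne hQ.
Qed.

End NearRightEnd.

Theorem mainTheorem2 (M : zmodType) (lt : M -> M -> Prop)
  (S : nat -> (seq M -> Prop) -> Prop)
  (Hgrp : ordered_group lt) (HS : is_structure lt S)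
  (Homin : o_minimal lt S) (Hlin : linear_structure S)
  (a b c d : M) (hab : lt a b) (hcd : lt c d) (h : M -> M -> M)
  (hdef : definable_on_box lt S a b c d h)
  (hcont : continuous_on_box lt a b c d h)
  (hincr : forall t, lt a t -> lt t b ->
     forall y1 y2, le lt c y1 -> le lt y2 d -> lt y1 y2 -> lt (h t y1) (h t y2)) :
  lt 0 (h b d - h b c).
Proof.
have Hdense := dense Hgrp HS Homin.
have [Bs [_ hcover _ haff]] := Hlin _ _ _ (definable_fun_box HS hdef).
have hpieces t y : lt a t -> lt t b -> lt c y -> lt y d -> exists C, In C Bs /\ C [:: t; y].
  by move=> hat htb hcy hyd; apply/hcover; exists t, y; split => //; do !split; left.
have [C [yl [yh [hC hlh hcl hhd hfreq]]]] :=
  exists_piece_frequently Hgrp Hdense hab hcd hpieces.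
exact: (diff_pos_of_affine_piece Hgrp Hdense hab hcont hincr (haff C hC) hlh hcl hhd hfreq).
Qed.
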